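(* Let $p$ be a prime, $n_1,n_2\ge 1$, and let $M_{n_1}\in\mathrm{Sym}_{n_1}(\mathbb{Z}_p)$, $M_{n_2}'\in\mathrm{Sym}_{n_2}(\mathbb{Z}_p)$ be nonsingular. The following are equivalent: (i) $(\mathrm{Cok}(M_{n_1}),\langle\cdot,\cdot\rangle)\simeq(\mathrm{Cok}(M_{n_2}'),\langle\cdot,\cdot\rangle)$. (ii) There exist $m\le\min\{n_1,n_2\}$ and matrices $M_{n_1}^{\mathrm{inv}}\in\mathrm{Sym}_{n_1-m}(\mathbb{Z}_p)\cap\mathrm{GL}_{n_1-m}(\mathbb{Z}_p)$, $M_{n_1}^{\mathrm{nil}}\in\mathrm{Sym}_m(p\mathbb{Z}_p)$, $M_{n_2}'^{\mathrm{inv}}\in\mathrm{Sym}_{n_2-m}(\mathbb{Z}_p)\cap\mathrm{GL}_{n_2-m}(\mathbb{Z}_p)$, $M_{n_2}'^{\mathrm{nil}}\in\mathrm{Sym}_m(p\mathbb{Z}_p)$ such that $(M_{n_1}^{\mathrm{nil}})^{-1}-(M_{n_2}'^{\mathrm{nil}})^{-1}\in\mathrm{Sym}_m(\mathbb{Z}_p)$, $M_{n_1}$ is congruent to $\begin{pmatrix}M_{n_1}^{\mathrm{inv}}&0\\0&M_{n_1}^{\mathrm{nil}}\end{pmatrix}$, and $M_{n_2}'$ is congruent to $\begin{pmatrix}M_{n_2}'^{\mathrm{inv}}&0\\0&M_{n_2}'^{\mathrm{nil}}\end{pmatrix}$. (iii) There exist $n\ge\max\{n_1,n_2\}$ and $M_{n-n_1}^c\in\mathrm{Sym}_{n-n_1}(\mathbb{Z}_p)\cap\mathrm{GL}_{n-n_1}(\mathbb{Z}_p)$,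 $M_{n-n_2}'^c\in\mathrm{Sym}_{n-n_2}(\mathbb{Z}_p)\cap\mathrm{GL}_{n-n_2}(\mathbb{Z}_p)$ such that $\begin{pmatrix}M_{n-n_1}^c&0\\0&M_{n_1}\end{pmatrix}$ is congruent to $\begin{pmatrix}M_{n-n_2}'^c&0\\0&M_{n_2}'\end{pmatrix}$.
   Context: $\mathbb{Z}_p$ denotes the $p$-adic integers; $\mathrm{Sym}_k(R)$ denotes symmetric $k\times k$ matrices over $R$. Two matrices $A,B\in\mathrm{Sym}_k(\mathbb{Z}_p)$ are congruent if $B=UAU^T$ for some $U\in\mathrm{GL}_k(\mathbb{Z}_p)$. For nonsingular $M\in\mathrm{Sym}_k(\mathbb{Z}_p)$, $\mathrm{Cok}(M):=\mathbb{Z}_p^k/M\mathbb{Z}_p^k$, a finite abelian $p$-group equipped with the perfect symmetric pairing $\langle x,y\rangle:=X^TM^{-1}Y\bmod\mathbb{Z}_p\in\mathbb{Q}_p/\mathbb{Z}_p$ ($X,Y$ lifts of $x,y$ to $\mathbb{Z}_p^k$). An isomorphism of such groups with pairings is a group isomorphism preserving the pairings. *)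

From HB Require Import structures.
From mathcomp Require Import all_boot all_algebra.
From mathcomp Require Import boolp zify.
Set Implicit Arguments. Unset Strict Implicit. Unset Printing Implicit Defensive.
Import GRing.Theory Num.Theory.
Local Open Scope ring_scope.

Section PadicIntegers.
Variable p : nat.
Definition padic_prime : nat := pdiv (maxn p 2).
Local Notation q := padic_prime.
Lemma padic_prime_prime : prime q.
Proof. by apply: pdiv_prime; rewrite leq_max ltnSn orbT. Qed.
Definition pmod (k : nat) : int := (q ^ k)%N%:Z.
Definition padic_coherent (f : nat -> int) := forall k, f k = (f k.+1 %% pmod k)%Z.
Record padic_int := PadicInt { padic_digits : nat -> int;
                               padic_digitsP : padic_coherent padic_digits }.

HB.instance Definition _ := gen_eqMixin padic_int.
HB.instance Definition _ := gen_choiceMixin padic_int.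

Local Notation D := padic_digits.

Lemma padic_eq (x y : padic_int) : D x =1 D y -> x = y.
Proof.
case: x y => f hf [g hg] /= /funext efg; subst g.
by rewrite (Prop_irrelevance hf hg).
Qed.

Lemma pmod_dvd j k : (j <= k)%N -> (pmod j %| pmod k)%Z.
Proof. by move=> le; rewrite dvdzE /pmod !absz_nat dvdn_exp2l. Qed.

Lemma modz_dvdm (a m d : int) : (d %| m)%Z -> modz (modz a m) d = modz a d.
Proof.
move=> /dvdzP [c ->]; rewrite [in RHS](divz_eq a (c * d)) mulrA modzMDl //.
Qed.

Lemma padic_norm (x : padic_int) k : (D x k %% pmod k)%Z = D x k.
Proof. by rewrite (padic_digitsP x k) modz_mod. Qed.

Lemma padic_cong (x : padic_int) j k : (j <= k)%N -> (D x k %% pmod j)%Z = D x j.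
Proof.
move=> /subnK <-; elim: (k - j)%N => [|i IH]; first exact: padic_norm.
rewrite addSn -IH (padic_digitsP x (i + j)) modz_dvdm //.
by apply: pmod_dvd; rewrite leq_addl.
Qed.

Lemma padic_of_coh (g : nat -> int) (hg : forall k, (g k.+1 = g k %[mod pmod k])%Z) :
  padic_coherent (fun k => (g k %% pmod k)%Z).
Proof.
move=> k; rewrite modz_dvdm ?pmod_dvd ?leqnSn //.
Qed.
Definition padic_of (g : nat -> int) (hg : forall k, (g k.+1 = g k %[mod pmod k])%Z) :
  padic_int := @PadicInt (fun k => (g k %% pmod k)%Z) (padic_of_coh hg).

Lemma padic_ofE g hg k : D (@padic_of g hg) k = (g k %% pmod k)%Z.
Proof. by []. Qed.

Lemma congD (x y : padic_int) k :
  (D x k.+1 + D y k.+1 = D x k + D y k %[mod pmod k])%Z.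
Proof. by rewrite -modzDm -!padic_digitsP. Qed.
Lemma congM (x y : padic_int) k :
  (D x k.+1 * D y k.+1 = D x k * D y k %[mod pmod k])%Z.
Proof. by rewrite -modzMm -!padic_digitsP. Qed.
Lemma congN (x : padic_int) k : (- D x k.+1 = - D x k %[mod pmod k])%Z.
Proof. by rewrite -modzNm -padic_digitsP. Qed.
Lemma congC (c : int) k : (c = c %[mod pmod k])%Z. Proof. by []. Qed.

Definition padic_add x y := padic_of (congD x y).
Definition padic_mul x y := padic_of (congM x y).
Definition padic_opp x := padic_of (congN x).
Definition padic_cst c := padic_of (congC c).
Definition padic_zero := padic_cst 0.
Definition padic_one := padic_cst 1.

Lemma padic_addA : associative padic_add.
Proof.
move=> x y z; apply: padic_eq => k; rewrite !padic_ofE.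
by rewrite modzDml modzDmr addrA.
Qed.
Lemma padic_addC : commutative padic_add.
Proof. by move=> x y; apply: padic_eq => k; rewrite !padic_ofE addrC. Qed.
Lemma padic_add0 : left_id padic_zero padic_add.
Proof. by move=> x; apply: padic_eq => k; rewrite !padic_ofE modzDml add0r padic_norm. Qed.
Lemma padic_addN : left_inverse padic_zero padic_opp padic_add.
Proof. by move=> x; apply: padic_eq => k; rewrite !padic_ofE modzDml addNr. Qed.

HB.instance Definition _ := GRing.isZmodule.Build padic_int
  padic_addA padic_addC padic_add0 padic_addN.

Lemma padic_mulA : associative padic_mul.
Proof.
move=> x y z; apply: padic_eq => k; rewrite !padic_ofE.
by rewrite modzMml modzMmr mulrA.
Qed.
Lemma padic_mulC : commutative padic_mul.
Proof. by move=> x y; apply: padic_eq => k; rewrite !padic_ofE mulrC. Qed.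
Lemma padic_mul1 : left_id padic_one padic_mul.
Proof. by move=> x; apply: padic_eq => k; rewrite !padic_ofE modzMml mul1r padic_norm. Qed.
Lemma padic_mulDl : left_distributive padic_mul padic_add.
Proof.
move=> x y z; apply: padic_eq => k; rewrite !padic_ofE.
by rewrite modzMml modzDm mulrDl.
Qed.
Lemma padic_one_neq0 : padic_one != 0.
Proof.
apply/eqP => /(congr1 (fun x => D x 1)).
change (D padic_one 1 = D padic_zero 1 -> False); rewrite /padic_one /padic_zero /padic_cst !padic_ofE /pmod expn1.
rewrite modz_small ?mod0z //.
by rewrite /= ltz_nat prime_gt1 // padic_prime_prime.
Qed.

HB.instance Definition _ := GRing.Zmodule_isComNzRing.Build padic_int
  padic_mulA padic_mulC padic_mul1 padic_mulDl padic_one_neq0.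

Definition padic_unit : {pred padic_int} := fun x => `[< exists y, y * x = 1 >].
Definition padic_inv (x : padic_int) : padic_int :=
  match pselect (exists y, y * x = 1) with
  | left h => proj1_sig (cid h)
  | right _ => x
  end.

Lemma padic_mulVx : {in padic_unit, left_inverse 1 padic_inv *%R}.
Proof.
move=> x /asboolP hx; rewrite /padic_inv; case: pselect => [h|//].
by case: (cid h).
Qed.
Lemma padic_unitPl x y : y * x = 1 -> padic_unit x.
Proof. by move=> h; apply/asboolP; exists y. Qed.
Lemma padic_inv_out : {in [predC padic_unit], padic_inv =1 id}.
Proof.
move=> x; rewrite inE /= => /asboolPn nx; rewrite /padic_inv.
by case: pselect.
Qed.

HB.instance Definition _ := GRing.ComNzRing_hasMulInverse.Build padic_int
  padic_mulVx padic_unitPl padic_inv_out.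

Lemma padic_valuation (x : padic_int) : x != 0 ->
  exists a, forall k, (a < k)%N -> (pmod a %| D x k)%Z && ~~ (pmod a.+1 %| D x k)%Z.
Proof.
move=> nx0.
have ex : exists k, D x k != 0.
  apply: contrapT => allz; move/negP: nx0; apply; apply/eqP.
  apply: padic_eq => k.
  change (D x k = D padic_zero k); rewrite /padic_zero /padic_cst padic_ofE mod0z.
  by apply: contrapT => ne; apply: allz; exists k; apply/eqP.
case: (ex_minnP ex) => k xk kmin.
have k0 : k != 0%N.
  by apply: contraNneq xk => ->; rewrite -padic_norm /pmod expn0 modz1.
have kpos : (0 < k)%N by rewrite lt0n.
exists k.-1 => j kj; rewrite prednK //.
have kj' : (k <= j)%N by rewrite -(prednK kpos).
apply/andP; split.
  apply/dvdz_mod0P; rewrite padic_cong ?(leq_trans (leq_pred k)) //.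
  apply/eqP; apply: contraT => nz; have := kmin _ nz.
  by rewrite -ltnS prednK // ltnn.
by apply: contra xk => /dvdz_mod0P; rewrite padic_cong // => ->.
Qed.

Lemma padic_mulf_eq0 : GRing.integral_domain_axiom padic_int.
Proof.
move=> x y xy0; apply: contraT; rewrite negb_or => /andP [nx ny].
have [a ha] := padic_valuation nx; have [b hb] := padic_valuation ny.
set k := (a + b).+1.
have /andP [dx ndx] := ha k (leq_ltn_trans (leq_addr b a) (ltnSn _)).
have /andP [dy ndy] := hb k (leq_ltn_trans (leq_addl a b) (ltnSn _)).
have : (pmod k %| D x k * D y k)%Z.
  apply/dvdz_mod0P; have := congr1 (fun z => D z k) xy0.
  change (D (padic_mul x y) k = D padic_zero k -> (D x k * D y k %% pmod k)%Z = 0).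
  by rewrite /padic_zero /padic_cst !padic_ofE mod0z.
move: dx ndx dy ndy; rewrite !dvdzE /pmod !absz_nat abszM.
set X := `|D x k|%N; set Y := `|D y k|%N.
have pq := padic_prime_prime.
move=> dx ndx dy ndy.
have Y0 : (0 < Y)%N by rewrite lt0n; apply: contra ndy => /eqP ->; rewrite dvdn0.
have X1 : (0 < X)%N by rewrite lt0n; apply: contra ndx => /eqP ->; rewrite dvdn0.
rewrite !pfactor_dvdn ?muln_gt0 ?X1 // in dx ndx dy ndy *.
rewrite lognM // /k.
move: dx ndx dy ndy; set u := logn q X; set v := logn q Y; lia.
Qed.

HB.instance Definition _ := GRing.ComUnitRing_isIntegral.Build padic_int
  padic_mulf_eq0.

End PadicIntegers.

(* For a prime p, padic_prime p = p, so padic_int p is Z_p realised as the   *)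
(* inverse limit of Z/p^k Z: coherent sequences (x_k)_k of integers with     *)
(* 0 <= x_k < p^k and x_{k+1} = x_k mod p^k.                                 *)

Lemma padic_prime_id p : prime p -> padic_prime p = p.
Proof.
move=> pp; rewrite /padic_prime; have p2 := prime_gt1 pp.
by rewrite (maxn_idPl p2) pdiv_id.
Qed.

Definition Qp (p : nat) := {fraction padic_int p}.

Definition toQp {p : nat} (x : padic_int p) : Qp p := FracField.tofrac x.
Definition mxQp {p m n : nat} (A : 'M[padic_int p]_(m, n)) : 'M[Qp p]_(m, n) :=
  map_mx toQp A.

Definition in_Zp {p : nat} (x : Qp p) : Prop := exists z : padic_int p, x = toQp z.

Definition symmx {R : Type} {k : nat} (A : 'M[R]_k) : Prop := A^T = A.

Definition in_pZp_mx {p m n : nat} (A : 'M[padic_int p]_(m, n)) : Prop :=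
  forall i j, exists c : padic_int p, A i j = p%:R * c.

Definition in_Zp_mx {p m n : nat} (A : 'M[Qp p]_(m, n)) : Prop :=
  forall i j, in_Zp (A i j).

Definition congruent {R : comUnitRingType} {k : nat} (A B : 'M[R]_k) : Prop :=
  exists2 U : 'M[R]_k, U \in unitmx & B = U *m A *m U^T.

Definition congruent_dim {R : comUnitRingType} {a b : nat}
  (A : 'M[R]_a) (B : 'M[R]_b) : Prop :=
  exists e : b = a, congruent A (castmx (e, e) B).

Definition in_image {R : nzRingType} {k : nat} (M : 'M[R]_k) (v : 'cV[R]_k) : Prop :=
  exists w : 'cV[R]_k, v = M *m w.

(* the pairing <x, y> = X^T M^{-1} Y (a value in Q_p, to be read mod Z_p) *)
Definition cok_pairing {p k : nat} (M : 'M[padic_int p]_k) (X Y : 'cV[padic_int p]_k)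
  : Qp p := ((mxQp X)^T *m invmx (mxQp M) *m mxQp Y) 0 0.

(* (Cok M, <,>) ~= (Cok M', <,>): an isomorphism of the groups               *)
(* Z_p^k1 / M Z_p^k1 ~= Z_p^k2 / M' Z_p^k2, given by a map g on              *)
(* representatives, preserving the pairings with values in Q_p/Z_p.          *)
Definition cok_isometric {p k1 k2 : nat}
  (M : 'M[padic_int p]_k1) (M' : 'M[padic_int p]_k2) : Prop :=
  exists g : 'cV[padic_int p]_k1 -> 'cV[padic_int p]_k2,
    [/\ (* well defined and injective on the quotients *)
        forall X Y, in_image M (X - Y) <-> in_image M' (g X - g Y),
        forall X Y, in_image M' (g (X + Y) - (g X + g Y)),
        forall Z, exists X, in_image M' (Z - g X) &
        forall X Y, in_Zp (cok_pairing M X Y - cok_pairing M' (g X) (g Y))].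

(* Over Z_p every nonsingular symmetric M is congruent to A \oplus N with A
   unimodular and N = 0 mod p, and the unimodular block changes neither the
   cokernel nor its pairing.  An isometry Cok N ~ Cok N' is automatically
   Z_p-linear (p^k kills both cokernels), hence induced by an integral matrix G;
   as N' = 0 mod p, surjectivity forces G to be invertible mod p, and then
   N^-1 = G^T N'^-1 G mod Z_p, which is (ii) after replacing N' by a congruent
   matrix.  Conversely, if N^-1 - N'^-1 = S is integral then N' = N + N T N for
   an integral symmetric T, and the matrix [N, N Y; Y^T N, R] with
   R = [T + 2, 1; 1, 0] and Y = [1 1] has Schur complements R - Y^T N Y and N',
   both next to unimodular blocks, which gives (iii).  Finally (iii) gives (i)
   because congruence and unimodular blocks preserve the cokernel pairing. *)

From HB Require Import structures.
From mathcomp Require Import all_boot all_order all_algebra.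
From mathcomp Require Import boolp zify.
Set Implicit Arguments. Unset Strict Implicit. Unset Printing Implicit Defensive.
Import Order.TTheory GRing.Theory Num.Theory.
Local Open Scope ring_scope.

Section PadicDigits.
Variable p : nat.
Hypothesis p_prime : prime p.
Local Notation R := (padic_int p).
Local Notation D := (@padic_digits p).

Lemma pmodE k : pmod p k = (p ^ k)%N%:Z.
Proof. by rewrite /pmod padic_prime_id. Qed.

Lemma pmod_neq0 k : pmod p k != 0.
Proof. by rewrite gt_eqF // pmodE ltz_nat expn_gt0 prime_gt0. Qed.

Lemma pmodD j k : pmod p (j + k) = pmod p j * pmod p k.
Proof. by rewrite !pmodE expnD PoszM. Qed.

Lemma padic_digitsD (x y : R) k : D (x + y) k = ((D x k + D y k) %% pmod p k)%Z.
Proof. by []. Qed.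

Lemma padic_digitsM (x y : R) k : D (x * y) k = ((D x k * D y k) %% pmod p k)%Z.
Proof. by []. Qed.

Lemma padic_digitsN (x : R) k : D (- x) k = ((- D x k) %% pmod p k)%Z.
Proof. by []. Qed.

Lemma padic_digits1 k : D 1 k = (1 %% pmod p k)%Z.
Proof. by []. Qed.

Lemma padic_digits_nat n k : D n%:R k = (n%:Z %% pmod p k)%Z.
Proof.
elim: n => [|n IH]; first by rewrite mod0z /= mod0z.
by rewrite -addn1 natrD padic_digitsD IH padic_digits1 modzDm PoszD.
Qed.

Lemma padic_digits_int (z : int) k : D z%:~R k = (z %% pmod p k)%Z.
Proof.
case: z => n; first exact: padic_digits_nat.
rewrite NegzE mulrNz padic_digitsN.
by rewrite (_ : _%:~R = n.+1%:R) // padic_digits_nat modzNm.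
Qed.

Lemma padic_digits_pexpM (y : R) k : D ((p ^ k)%N%:R * y) k = 0.
Proof. by rewrite padic_digitsM padic_digits_nat -pmodE modzMml mulrC modzMl. Qed.

(* The quotients [x_(j+k) / p^k] of the digits of [x] are again coherent. *)
Lemma padic_digits_eq0P (x : R) k : D x k = 0 <-> exists y, x = (p ^ k)%N%:R * y.
Proof.
split=> [x0|[y ->]]; last exact: padic_digits_pexpM.
have dvd_digits i : (k <= i)%N -> (pmod p k %| D x i)%Z.
  by move=> ki; apply/dvdz_mod0P; rewrite padic_cong.
pose g j := (D x (j + k) %/ pmod p k)%Z.
have g_coh j : (g j.+1 = g j %[mod pmod p j])%Z.
  have e : D x (j.+1 + k) =
      (D x (j.+1 + k) %/ pmod p (j + k))%Z * pmod p j * pmod p k + D x (j + k).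
    by rewrite -mulrA -pmodD (padic_digitsP x (j + k)) -addSn -divz_eq.
  by rewrite /g e divzMDl ?pmod_neq0 // modzMDl.
exists (padic_of g_coh); apply: padic_eq => j.
rewrite padic_digitsM padic_ofE padic_digits_nat -pmodE modzMml modzMmr /g mulrC.
by rewrite divzK ?dvd_digits ?leq_addl // padic_cong // leq_addr.
Qed.

Lemma padic_digits_approx (x : R) k : exists y, x = (D x k)%:~R + (p ^ k)%N%:R * y.
Proof.
have /padic_digits_eq0P [y e] : D (x - (D x k)%:~R) k = 0.
  by rewrite padic_digitsD padic_digitsN padic_digits_int padic_norm modzDmr subrr mod0z.
by exists y; rewrite -e addrC subrK.
Qed.

(* The inverse is assembled from Bezout inverses of the digits modulo [p ^ j]. *)
Lemma padic_unitE (x : R) : (x \is a GRing.unit) = (D x 1 != 0).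
Proof.
apply/idP/idP => [ux|x1].
  apply/eqP => /padic_digits_eq0P [y xy].
  have : D 1 1 = 0 by rewrite -(mulVr ux) xy mulrCA padic_digits_pexpM.
  by rewrite padic_digits1 pmodE expn1 modz_small //= ltz_nat prime_gt1.
pose g j := (egcdz (D x j) (pmod p j)).1.
have coprime_digits j : coprimez (D x j) (pmod p j).
  case: j => [|j]; first by rewrite coprimezE pmodE expn0 absz_nat coprimen1.
  rewrite coprimezE pmodE absz_nat coprime_pexpr // coprime_sym prime_coprime //.
  apply: contra x1 => pdvd; rewrite -(padic_cong x (ltn0Sn j)).
  by apply/eqP/dvdz_mod0P; rewrite pmodE expn1 dvdzE absz_nat.
have g_inv j : (pmod p j %| g j * D x j - 1)%Z.
  rewrite /g; case: egcdzP => u v /= e _.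
  move/eqP: (coprime_digits j) => g1; rewrite g1 in e.
  have -> : u * D x j - 1 = - (v * pmod p j) by rewrite -e opprD addrA subrr add0r.
  by rewrite rpredN dvdz_mull.
have g_coh j : (g j.+1 = g j %[mod pmod p j])%Z.
  apply/eqP; rewrite eqz_mod_dvd.
  have g_inv' : (pmod p j %| g j.+1 * D x j - 1)%Z.
    have /(dvdz_trans (pmod_dvd p (leqnSn j)))/dvdz_mod0P h := g_inv j.+1.
    apply/dvdz_mod0P; rewrite (padic_digitsP x j).
    by rewrite -modzDml -modzMmr modz_mod modzMmr modzDml.
  have -> : g j.+1 - g j = g j.+1 * (1 - g j * D x j) + g j * (g j.+1 * D x j - 1).
    by rewrite mulrBr mulr1 mulrBr mulr1 mulrCA mulrA addrA subrK.
  by apply: rpredD; apply: dvdz_mull; rewrite // -opprB rpredN.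
apply/unitrP; exists (padic_of g_coh).
have e : padic_of g_coh * x = 1.
  apply: padic_eq => j; rewrite padic_digitsM padic_ofE modzMml padic_digits1.
  by apply/eqP; rewrite eqz_mod_dvd g_inv.
by split; rewrite // mulrC.
Qed.

Lemma padic_pexp_unit (x : R) : x != 0 ->
  exists k u, u \is a GRing.unit /\ x = (p ^ k)%N%:R * u.
Proof.
move=> x0; have [a val_a] := padic_valuation x0.
have /andP [dvd_a ndvd_a1] := val_a a.+1 (ltnSn a).
have /padic_digits_eq0P [u xu] : D x a = 0.
  by rewrite -(padic_cong x (leqnSn a)); apply/dvdz_mod0P.
exists a, u; split => //; rewrite padic_unitE; apply/eqP => /padic_digits_eq0P [v uv].
by move: ndvd_a1; rewrite xu uv mulrA -natrM -expnSr padic_digits_pexpM dvdz0.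
Qed.

End PadicDigits.

Section PadicReduction.
Variable p : nat.
Hypothesis p_prime : prime p.
Local Notation R := (padic_int p).
Local Notation D := (@padic_digits p).
Local Notation Fp := 'F_(padic_prime p).

Definition padic_red (x : R) : Fp := (D x 1)%:~R.

Lemma Fp_intr_mod (z : int) : ((z %% pmod p 1)%Z)%:~R = z%:~R :> Fp.
Proof.
rewrite [in RHS](divz_eq z (pmod p 1)) [RHS]intrD [X in _ = X + _]intrM /pmod expn1.
by rewrite [(padic_prime p)%:~R](pchar_Fp_0 (padic_prime_prime p)) mulr0 add0r.
Qed.

Lemma padic_red_zmod_morphism : zmod_morphism padic_red.
Proof.
move=> x y; rewrite /padic_red padic_digitsD padic_digitsN.
by rewrite Fp_intr_mod intrD Fp_intr_mod intrN.
Qed.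
HB.instance Definition _ :=
  GRing.isZmodMorphism.Build R Fp padic_red padic_red_zmod_morphism.

Lemma padic_red_monoid_morphism : monoid_morphism padic_red.
Proof.
split=> [|x y]; last by rewrite /padic_red padic_digitsM Fp_intr_mod intrM.
rewrite /padic_red padic_digits1 /pmod expn1 modz_small //=.
by rewrite ltz_nat prime_gt1 // padic_prime_prime.
Qed.
HB.instance Definition _ :=
  GRing.isMonoidMorphism.Build R Fp padic_red padic_red_monoid_morphism.

Lemma padic_red_eq0 (x : R) : (padic_red x == 0) = (D x 1 == 0).
Proof.
have q_gt0 : 0 < pmod p 1 by rewrite ltz_nat expn_gt0 prime_gt0 // padic_prime_prime.
have : 0 <= D x 1 by rewrite -padic_norm modz_ge0 // gt_eqF.
have : D x 1 < pmod p 1 by rewrite -padic_norm ltz_pmod.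
rewrite /padic_red; case: (D x 1) => // n; rewrite /pmod expn1 ltz_nat => n_lt _.
rewrite (_ : _%:~R = n%:R) //; apply/eqP/eqP => [n0|[->]] //.
by have := val_Fp_nat (padic_prime_prime p) n; rewrite n0 modn_small // => <-.
Qed.

Lemma padic_unit_red (x : R) : (x \is a GRing.unit) = (padic_red x != 0).
Proof. by rewrite padic_unitE // padic_red_eq0. Qed.

Lemma padic_red_eq0P (x : R) : padic_red x = 0 <-> exists c, x = p%:R * c.
Proof.
rewrite -[p in exists c, _ = p%:R * c]expn1 -padic_digits_eq0P //.
by split=> [/eqP | /eqP x1]; [rewrite padic_red_eq0 => /eqP | apply/eqP; rewrite padic_red_eq0].
Qed.

Definition padic_lift (a : Fp) : R := (a : nat)%:R.

Lemma padic_liftK : cancel padic_lift padic_red.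
Proof. by move=> a; rewrite /padic_lift rmorph_nat natr_Zp. Qed.

Lemma unitmx_red n (A : 'M[R]_n) : (A \in unitmx) = (map_mx padic_red A \in unitmx).
Proof. by rewrite !unitmxE det_map_mx unitfE -padic_unit_red. Qed.

Lemma in_pZp_mxE m n (A : 'M[R]_(m, n)) : in_pZp_mx A <-> map_mx padic_red A = 0.
Proof.
split=> [pA | /matrixP pA i j]; last by apply/padic_red_eq0P; have := pA i j; rewrite !mxE.
by apply/matrixP => i j; rewrite !mxE; apply/padic_red_eq0P.
Qed.

End PadicReduction.

Section PadicFractions.
Variable p : nat.
Local Notation R := (padic_int p).
Local Notation Q := (Qp p).

HB.instance Definition _ := GRing.isZmodMorphism.Build R Q (@toQp p)
  (@tofrac_is_zmod_morphism R).
HB.instance Definition _ := GRing.isMonoidMorphism.Build R Q (@toQp p)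
  (@tofrac_is_monoid_morphism R).

Lemma toQp_inj : injective (@toQp p).
Proof. by move=> x y /eqP; rewrite tofrac_eq => /eqP. Qed.

Lemma mxQp_inj m n : injective (@mxQp p m n).
Proof.
by move=> A B /matrixP eqAB; apply/matrixP => i j; have := eqAB i j; rewrite !mxE => /toQp_inj.
Qed.

Lemma mxQpM m n k (A : 'M[R]_(m, n)) (B : 'M[R]_(n, k)) :
  mxQp (A *m B) = mxQp A *m mxQp B.
Proof. exact: map_mxM. Qed.

Lemma mxQpD m n (A B : 'M[R]_(m, n)) : mxQp (A + B) = mxQp A + mxQp B.
Proof. exact: map_mxD. Qed.

Lemma mxQpB m n (A B : 'M[R]_(m, n)) : mxQp (A - B) = mxQp A - mxQp B.
Proof. exact: map_mxB. Qed.

Lemma mxQp_tr m n (A : 'M[R]_(m, n)) : mxQp A^T = (mxQp A)^T.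
Proof. by rewrite /mxQp map_trmx. Qed.

Lemma mxQp1 n : mxQp (1%:M : 'M[R]_n) = 1%:M.
Proof. exact: map_mx1. Qed.

Lemma unitmx_mxQp n (A : 'M[R]_n) : \det A != 0 -> mxQp A \in unitmx.
Proof. by move=> dA; rewrite unitmxE det_map_mx unitfE tofrac_eq0. Qed.

Lemma in_Zp_toQp (z : R) : in_Zp (toQp z). Proof. by exists z. Qed.

Lemma in_Zp_mxQp m n (A : 'M[R]_(m, n)) i j : in_Zp (mxQp A i j).
Proof. by rewrite mxE; apply: in_Zp_toQp. Qed.

Lemma in_ZpD (x y : Q) : in_Zp x -> in_Zp y -> in_Zp (x + y).
Proof. by case=> a -> [b ->]; exists (a + b); rewrite rmorphD. Qed.

Lemma in_ZpN (x : Q) : in_Zp x -> in_Zp (- x).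
Proof. by case=> a ->; exists (- a); rewrite rmorphN. Qed.

Lemma in_Zp_mxP m n (X : 'M[Q]_(m, n)) : in_Zp_mx X -> exists S, X = mxQp S.
Proof.
move=> /(_ _ _)/cid X_Zp; exists (\matrix_(i, j) sval (X_Zp i j)).
by apply/matrixP => i j; rewrite !mxE; case: (X_Zp i j).
Qed.

End PadicFractions.

Notation "A \oplus B" := (block_mx A 0 0 B) (at level 45, left associativity).

Section MatrixCongruence.
Variable K : comUnitRingType.

(* Congruence between matrices whose sizes are only propositionally equal,
   which avoids casts when reshuffling diagonal blocks. *)
Definition mxcong {a b} (A : 'M[K]_a) (B : 'M[K]_b) :=
  exists U : 'M[K]_(b, a), exists V : 'M[K]_(a, b),
    [/\ U *m V = 1%:M, V *m U = 1%:M & B = U *m A *m U^T].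

Lemma mxcong_refl a (A : 'M[K]_a) : mxcong A A.
Proof. by exists 1%:M, 1%:M; rewrite mulmx1 mul1mx trmx1 mulmx1. Qed.

Lemma mxcong_sym a b (A : 'M[K]_a) (B : 'M[K]_b) : mxcong A B -> mxcong B A.
Proof.
case=> U [V [UV VU ->]]; exists V, U; split => //.
by rewrite !mulmxA VU mul1mx -mulmxA -trmx_mul VU trmx1 mulmx1.
Qed.

Lemma mxcong_trans a b c (A : 'M[K]_a) (B : 'M[K]_b) (C : 'M[K]_c) :
  mxcong A B -> mxcong B C -> mxcong A C.
Proof.
case=> U [V [UV VU ->]] [U' [V' [UV' VU' ->]]].
exists (U' *m U), (V *m V'); split; last by rewrite trmx_mul !mulmxA.
- by rewrite mulmxA -(mulmxA U') UV mulmx1 UV'.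
- by rewrite mulmxA -(mulmxA V) VU' mulmx1 VU.
Qed.

Lemma mxcong_castmx a b (e : a = b) (A : 'M[K]_a) : mxcong A (castmx (e, e) A).
Proof. by case: b / e; rewrite castmx_id; apply: mxcong_refl. Qed.

Lemma congruent_mxcong a (A B : 'M[K]_a) : congruent A B <-> mxcong A B.
Proof.
split=> [[U uU ->] | [U [V [UV VU ->]]]].
  by exists U, (invmx U); split; [exact: mulmxV | exact: mulVmx |].
by exists U; case: (mulmx1_unit UV).
Qed.

Lemma congruent_dim_mxcong a b (A : 'M[K]_a) (B : 'M[K]_b) :
  congruent_dim A B -> mxcong A B.
Proof.
case=> e /congruent_mxcong AB; apply: (mxcong_trans AB).
exact/mxcong_sym/mxcong_castmx.
Qed.

Lemma mxcong_congruent_dim a b (A : 'M[K]_a) (B : 'M[K]_b) :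
  b = a -> mxcong A B -> congruent_dim A B.
Proof.
move=> e AB; exists e; apply/congruent_mxcong.
exact: mxcong_trans AB (mxcong_castmx _ _).
Qed.

Lemma mxcong_dsum a1 a2 b1 b2 (A1 : 'M[K]_a1) (A2 : 'M[K]_a2)
    (B1 : 'M[K]_b1) (B2 : 'M[K]_b2) :
  mxcong A1 B1 -> mxcong A2 B2 -> mxcong (A1 \oplus A2) (B1 \oplus B2).
Proof.
case=> U [V [UV VU ->]] [U' [V' [UV' VU' ->]]].
exists (U \oplus U'), (V \oplus V'); rewrite !mulmx_block !mulmx0 !mul0mx !addr0 !add0r.
by rewrite UV UV' VU VU' -!scalar_mx_block tr_block_mx !trmx0 !mulmx_block
  !mulmx0 !mul0mx !addr0 !add0r.
Qed.

Lemma mxcong_dsumC a b (A : 'M[K]_a) (B : 'M[K]_b) : mxcong (A \oplus B) (B \oplus A).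
Proof.
exists (block_mx 0 1%:M 1%:M 0), (block_mx 0 1%:M 1%:M 0).
rewrite tr_block_mx !trmx0 !trmx1 !mulmx_block !mulmx0 !mul0mx !mulmx1 !mul1mx.
by rewrite !addr0 !add0r -!scalar_mx_block.
Qed.

Lemma mxcong_dsumA a b c (A : 'M[K]_a) (B : 'M[K]_b) (C : 'M[K]_c) :
  mxcong (A \oplus B \oplus C) (A \oplus (B \oplus C)).
Proof.
have := @block_mxA K a b c a b c A 0 0 0 B 0 0 0 C; rewrite /= !row_mx0 !col_mx0 => ->.
exact: mxcong_castmx.
Qed.

Lemma mxcong_dsumACA a b c d (A : 'M[K]_a) (B : 'M[K]_b) (C : 'M[K]_c) (D : 'M[K]_d) :
  mxcong (A \oplus B \oplus (C \oplus D)) (A \oplus C \oplus (B \oplus D)).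
Proof.
apply: mxcong_trans (mxcong_dsumA _ _ _) _.
apply: mxcong_trans _ (mxcong_sym (mxcong_dsumA _ _ _)).
apply: mxcong_dsum; first exact: mxcong_refl.
apply: mxcong_trans (mxcong_sym (mxcong_dsumA _ _ _)) _.
apply: mxcong_trans _ (mxcong_dsumA _ _ _).
exact: mxcong_dsum (mxcong_dsumC _ _) (mxcong_refl _).
Qed.

Lemma mxcong_shear_dl a b (A : 'M[K]_a) (B : 'M[K]_b) (Z : 'M[K]_(b, a)) :
  mxcong (A \oplus B) (block_mx A (A *m Z^T) (Z *m A) (B + Z *m A *m Z^T)).
Proof.
exists (block_mx 1%:M 0 Z 1%:M), (block_mx 1%:M 0 (- Z) 1%:M).
rewrite tr_block_mx !trmx0 !trmx1 !mulmx_block !mulmx0 !mul0mx !mulmx1 !mul1mx.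
by rewrite !addr0 !add0r subrr addNr -!scalar_mx_block (addrC (Z *m A *m Z^T)).
Qed.

Lemma mxcong_shear_ur a b (A : 'M[K]_a) (B : 'M[K]_b) (W : 'M[K]_(a, b)) :
  mxcong (A \oplus B) (block_mx (A + W *m B *m W^T) (W *m B) (B *m W^T) B).
Proof.
exists (block_mx 1%:M W 0 1%:M), (block_mx 1%:M (- W) 0 1%:M).
rewrite tr_block_mx !trmx0 !trmx1 !mulmx_block !mulmx0 !mul0mx !mulmx1 !mul1mx.
by rewrite !addr0 !add0r subrr addNr -!scalar_mx_block.
Qed.

Lemma mxcong_schur_complement a b (P : 'M[K]_a) (Q : 'M[K]_b) (B : 'M[K]_(b, a)) :
  P^T = P -> P \in unitmx ->
  mxcong (block_mx P B^T B Q) (P \oplus (Q - B *m invmx P *m B^T)).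
Proof.
move=> sP uP; apply/mxcong_sym.
have PZ : P *m (B *m invmx P)^T = B^T.
  by rewrite trmx_mul trmx_inv sP mulmxA mulmxV ?mul1mx.
have ZP : B *m invmx P *m P = B by rewrite -mulmxA mulVmx ?mulmx1.
have := mxcong_shear_dl P (Q - B *m invmx P *m B^T) (B *m invmx P).
by rewrite -[_ *m P *m _]mulmxA PZ ZP subrK.
Qed.

(* Both sides are the two Schur decompositions of
   [block_mx N (N *m Y) (Y^T *m N) R]. *)
Lemma mxcong_schur_swap a b (N : 'M[K]_a) (R : 'M[K]_b) (Y : 'M[K]_(a, b)) :
  N^T = N -> R^T = R -> R \in unitmx ->
  mxcong (N \oplus (R - Y^T *m N *m Y))
         ((N - N *m Y *m invmx R *m Y^T *m N) \oplus R).
Proof.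
move=> sN sR uR; set W := N *m Y *m invmx R.
have WR : W *m R = N *m Y by rewrite -mulmxA mulVmx ?mulmx1.
have RW : R *m W^T = Y^T *m N.
  by rewrite !trmx_mul trmx_inv sR sN !mulmxA mulmxV ?mul1mx.
rewrite (_ : W *m Y^T *m N = W *m R *m W^T); last by rewrite -mulmxA -RW mulmxA.
apply: mxcong_trans (mxcong_shear_dl N _ Y^T) _; rewrite trmxK subrK.
have := mxcong_sym (mxcong_shear_ur (N - W *m R *m W^T) R W).
by rewrite subrK WR RW.
Qed.

End MatrixCongruence.

Lemma unitmx_det_neq0 (K : idomainType) n (A : 'M[K]_n) : A \in unitmx -> \det A != 0.
Proof. by rewrite unitmxE; apply: contraTneq => ->; rewrite unitr0. Qed.

Lemma mxcong_det_neq0 (K : idomainType) a b (A : 'M[K]_a) (B : 'M[K]_b) :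
  b = a -> mxcong A B -> \det A != 0 -> \det B != 0.
Proof.
move=> e; case: a / e A => A [U [V [UV _ ->]]] dA.
have /unitmx_det_neq0 dU : U \in unitmx by case/mulmx1_unit: UV.
by rewrite !det_mulmx det_tr !mulf_neq0.
Qed.

Lemma trmx_castmx_sym (T : Type) a b (e : a = b) (A : 'M[T]_a) :
  A^T = A -> (castmx (e, e) A)^T = castmx (e, e) A.
Proof. by case: b / e; rewrite castmx_id. Qed.

Lemma unitmx_castmx (K : comUnitRingType) a b (e : a = b) (A : 'M[K]_a) :
  (castmx (e, e) A \in unitmx) = (A \in unitmx).
Proof. by case: b / e; rewrite castmx_id. Qed.

Lemma trmx_dsum_sym (T : zmodType) a b (A : 'M[T]_a) (B : 'M[T]_b) :
  A^T = A -> B^T = B -> (A \oplus B)^T = A \oplus B.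
Proof. by move=> sA sB; rewrite tr_block_mx !trmx0 sA sB. Qed.

Lemma unitmx_dsum (K : comUnitRingType) a b (A : 'M[K]_a) (B : 'M[K]_b) :
  (A \oplus B \in unitmx) = (A \in unitmx) && (B \in unitmx).
Proof. by rewrite !unitmxE det_ublock unitrM. Qed.

Lemma mulmx1_invmx (K : comUnitRingType) n (B X : 'M[K]_n) :
  B *m X = 1%:M -> invmx B = X.
Proof. by move=> BX; have [uB _] := mulmx1_unit BX; rewrite -[X](mulKmx uB) BX mulmx1. Qed.

Lemma invmx_mxcong (K : comUnitRingType) a b (A : 'M[K]_a)
    (U : 'M[K]_(b, a)) (V : 'M[K]_(a, b)) :
  A \in unitmx -> U *m V = 1%:M -> V *m U = 1%:M ->
  invmx (U *m A *m U^T) = V^T *m invmx A *m V.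
Proof.
move=> uA UV VU; apply: mulmx1_invmx.
rewrite !mulmxA -(mulmxA _ U^T) -trmx_mul VU trmx1 mulmx1.
by rewrite -(mulmxA _ A) mulmxV // mulmx1 UV.
Qed.

Section CokernelCongruence.
Variables (R : nzRingType) (n : nat) (M : 'M[R]_n).

Definition cok_eq (X Y : 'cV[R]_n) := in_image M (X - Y).

Lemma in_image0 : in_image M 0.
Proof. by exists 0; rewrite mulmx0. Qed.

Lemma in_imageD X Y : in_image M X -> in_image M Y -> in_image M (X + Y).
Proof. by case=> a -> [b ->]; exists (a + b); rewrite mulmxDr. Qed.

Lemma in_imageN X : in_image M X -> in_image M (- X).
Proof. by case=> a ->; exists (- a); rewrite mulmxN. Qed.

Lemma cok_eq_refl X : cok_eq X X.
Proof. by rewrite /cok_eq subrr; apply: in_image0. Qed.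

Lemma cok_eq_sym X Y : cok_eq X Y -> cok_eq Y X.
Proof. by rewrite /cok_eq => /in_imageN; rewrite opprB. Qed.

Lemma cok_eq_trans X Y Z : cok_eq X Y -> cok_eq Y Z -> cok_eq X Z.
Proof. by rewrite /cok_eq => XY YZ; rewrite -(subrK Y X) -addrA; apply: in_imageD. Qed.

Lemma cok_eqD X X' Y Y' : cok_eq X X' -> cok_eq Y Y' -> cok_eq (X + Y) (X' + Y').
Proof. by rewrite /cok_eq => XX YY; rewrite opprD addrACA; apply: in_imageD. Qed.

Lemma cok_eqN X Y : cok_eq X Y -> cok_eq (- X) (- Y).
Proof. by rewrite /cok_eq -opprD => /in_imageN. Qed.

Lemma cok_eq_sum (I : Type) (r : seq I) (F G : I -> 'cV[R]_n) :
  (forall i, cok_eq (F i) (G i)) -> cok_eq (\sum_(i <- r) F i) (\sum_(i <- r) G i).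
Proof.
move=> FG; apply: (big_ind2 cok_eq); [exact: cok_eq_refl | exact: cok_eqD |].
by move=> i _; apply: FG.
Qed.

End CokernelCongruence.

Section CokernelIsometries.
Variable p : nat.
Local Notation R := (padic_int p).

Lemma cok_pairing_shiftl n (B : 'M[R]_n) X Y w : B^T = B -> \det B != 0 ->
  cok_pairing B (X + B *m w) Y = cok_pairing B X Y + toQp ((w^T *m Y) 0 0).
Proof.
move=> sB dB; rewrite /cok_pairing mxQpD linearD /= !mulmxDl mxE; congr (_ + _).
rewrite mxQpM trmx_mul -[(mxQp B)^T]mxQp_tr sB -(mulmxA _ (mxQp B)).
by rewrite mulmxV ?unitmx_mxQp // mulmx1 -mxQp_tr -mxQpM mxE.
Qed.

Lemma cok_pairing_shiftr n (B : 'M[R]_n) X Y w : \det B != 0 ->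
  cok_pairing B X (Y + B *m w) = cok_pairing B X Y + toQp ((X^T *m w) 0 0).
Proof.
move=> dB; rewrite /cok_pairing mxQpD !mulmxDr mxE mxQpM; congr (_ + _).
by rewrite mulmxA -(mulmxA _ _ (mxQp B)) mulVmx ?unitmx_mxQp // mulmx1 -mxQp_tr -mxQpM mxE.
Qed.

Lemma cok_pairing_cok_eq n (B : 'M[R]_n) X X' Y Y' : B^T = B -> \det B != 0 ->
  cok_eq B X X' -> cok_eq B Y Y' -> in_Zp (cok_pairing B X Y - cok_pairing B X' Y').
Proof.
move=> sB dB [w Xw] [v Yv].
have -> : X = X' + B *m w by rewrite -Xw addrC subrK.
have -> : Y = Y' + B *m v by rewrite -Yv addrC subrK.
rewrite cok_pairing_shiftl // cok_pairing_shiftr // -!addrA addrC !addrA subrK.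
by apply: in_ZpD; apply: in_Zp_toQp.
Qed.

Lemma cok_isometric_trans a b c (A : 'M[R]_a) (B : 'M[R]_b) (C : 'M[R]_c) :
  cok_isometric A B -> cok_isometric B C -> cok_isometric A C.
Proof.
case=> g [g_inj g_add g_surj g_pair] [h [h_inj h_add h_surj h_pair]].
exists (h \o g); split => /=.
- by move=> X Y; rewrite g_inj.
- move=> X Y; apply: (@cok_eq_trans _ _ _ _ (h (g X + g Y))); last exact: h_add.
  exact/h_inj/g_add.
- move=> Z; have [Y hY] := h_surj Z; have [X gX] := g_surj Y.
  by exists X; apply: (cok_eq_trans hY); apply/h_inj.
- move=> X Y; rewrite -[cok_pairing A X Y](subrK (cok_pairing B (g X) (g Y))) -addrA.
  exact: in_ZpD.
Qed.

Lemma cok_isometric_sym a b (A : 'M[R]_a) (B : 'M[R]_b) : B^T = B -> \det B != 0 ->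
  cok_isometric A B -> cok_isometric B A.
Proof.
move=> sB dB [g [g_inj g_add g_surj g_pair]].
have [g' g'K] := choice g_surj.
have gK Z : cok_eq B (g (g' Z)) Z by apply: cok_eq_sym; apply: g'K.
exists g'; split.
- move=> Z1 Z2; rewrite g_inj; split => eqZ.
  + exact: cok_eq_trans (gK Z1) (cok_eq_trans eqZ (cok_eq_sym (gK Z2))).
  + exact: cok_eq_trans (cok_eq_trans (cok_eq_sym (gK Z1)) eqZ) (gK Z2).
- move=> Z1 Z2; apply/g_inj.
  apply: (@cok_eq_trans _ _ _ _ (Z1 + Z2)); first exact: gK.
  apply: (@cok_eq_trans _ _ _ _ (g (g' Z1) + g (g' Z2))).
    by apply: cok_eqD; apply: cok_eq_sym.
  exact: cok_eq_sym (g_add _ _).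
- by move=> X; exists (g X); apply/g_inj; apply: cok_eq_sym.
- move=> Z1 Z2; have := in_ZpD (g_pair (g' Z1) (g' Z2))
    (cok_pairing_cok_eq sB dB (gK Z1) (gK Z2)).
  by rewrite addrA subrK => /in_ZpN; rewrite opprB.
Qed.

Lemma cok_isometric_mxcong a b (A : 'M[R]_a) (B : 'M[R]_b) :
  \det A != 0 -> mxcong A B -> cok_isometric A B.
Proof.
move=> dA [U [V [UV VU ->]]].
exists (mulmx U); split.
- move=> X Y; rewrite -mulmxBr; split=> [[w ->] | [w XYw]].
    by exists (V^T *m w); rewrite -!mulmxA (mulmxA U^T) -trmx_mul VU trmx1 mul1mx.
  exists (U^T *m w).
  by rewrite -[X - Y]mul1mx -VU -mulmxA XYw !mulmxA VU mul1mx.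
- by move=> X Y; rewrite mulmxDr; apply: cok_eq_refl.
- by move=> Z; exists (V *m Z); rewrite mulmxA UV mul1mx; apply: cok_eq_refl.
- move=> X Y; rewrite /cok_pairing.
  have UVQ : mxQp U *m mxQp V = 1%:M by rewrite -mxQpM UV mxQp1.
  have VUQ : mxQp V *m mxQp U = 1%:M by rewrite -mxQpM VU mxQp1.
  rewrite !mxQpM mxQp_tr (invmx_mxcong (unitmx_mxQp dA) UVQ VUQ) trmx_mul !mulmxA.
  rewrite -(mulmxA _ (mxQp U)^T) -trmx_mul VUQ trmx1 mulmx1.
  rewrite -(mulmxA _ (mxQp V)) VUQ mulmx1 subrr.
  by exists 0; rewrite rmorph0.
Qed.

Lemma cok_isometric_drop a n (C : 'M[R]_a) (N : 'M[R]_n) :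
  C \in unitmx -> \det N != 0 -> cok_isometric (C \oplus N) N.
Proof.
move=> uC dN; exists dsubmx; split.
- move=> X Y; rewrite -linearB /=; split=> [[w ->] | [w XYw]].
    by exists (dsubmx w); rewrite -[w]vsubmxK mul_block_col !mul0mx add0r !col_mxKd.
  exists (col_mx (invmx C *m usubmx (X - Y)) w).
  by rewrite mul_block_col !mul0mx add0r addr0 mulKVmx // -XYw vsubmxK.
- by move=> X Y; rewrite linearD /=; apply: cok_eq_refl.
- by move=> Z; exists (col_mx 0 Z); rewrite col_mxKd; apply: cok_eq_refl.
- move=> X Y; rewrite /cok_pairing.
  have -> : invmx (mxQp (C \oplus N)) = mxQp (invmx C) \oplus invmx (mxQp N).
    apply: mulmx1_invmx; rewrite /mxQp map_block_mx !map_mx0 mulmx_block.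
    rewrite !mulmx0 !mul0mx !addr0 !add0r -map_mxM (mulmxV uC) map_mx1.
    by rewrite (mulmxV (unitmx_mxQp dN)) -scalar_mx_block.
  rewrite -[X]vsubmxK -[Y]vsubmxK !col_mxKd /mxQp !map_col_mx tr_col_mx.
  rewrite mul_row_block !mulmx0 addr0 add0r mul_row_col mxE addrK.
  by have := in_Zp_mxQp ((usubmx X)^T *m invmx C *m usubmx Y) 0 0; rewrite !mxQpM mxQp_tr.
Qed.

End CokernelIsometries.

Lemma row_free_surj (F : fieldType) m n (A : 'M[F]_(m, n)) :
  (forall z : 'cV_m, exists x, A *m x = z) -> row_free A.
Proof.
move=> Asurj; have [x Ax] := choice (fun j : 'I_m => Asurj (delta_mx j 0)).
apply/row_freeP; exists (\matrix_(i, j) x j i 0); apply/matrixP => i j.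
have := congr1 (fun z : 'cV_m => z i 0) (Ax j); rewrite !mxE eqxx andbT => <-.
by apply: eq_bigr => l _; rewrite !mxE.
Qed.

Lemma delta_pairingE (K : nzRingType) n (A : 'M[K]_n) (i j : 'I_n) :
  ((delta_mx i 0 : 'cV_n)^T *m A *m (delta_mx j 0 : 'cV_n)) 0 0 = A i j.
Proof. by rewrite trmx_delta -rowE -colE !mxE. Qed.

Section CokernelLinearization.
Variable p : nat.
Hypothesis p_prime : prime p.
Local Notation R := (padic_int p).
Local Notation pexp k := ((p ^ k)%N%:R : R).

Lemma mxQp_delta m n (i : 'I_m) (j : 'I_n) : mxQp (delta_mx i j : 'M[R]_(m, n)) = delta_mx i j.
Proof. by apply/matrixP => x y; rewrite !mxE; case: (_ && _); rewrite ?rmorph1 ?rmorph0. Qed.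

Lemma in_image_pexp n (N : 'M[R]_n) : \det N != 0 ->
  exists k, forall j X, (k <= j)%N -> in_image N (pexp j *: X).
Proof.
move=> dN; have [k [u [uu eu]]] := padic_pexp_unit p_prime dN.
exists k => j X kj; exists (u^-1 *: (pexp (j - k) *: (\adj N *m X))).
rewrite -!scalemxAr mulmxA mul_mx_adj eu mul_scalar_mx !scalerA.
rewrite (_ : (p ^ j)%N = p ^ (j - k) * p ^ k)%N ?natrM; last by rewrite -expnD subnK.
by rewrite [_ * u]mulrC mulrA (mulrAC u^-1) mulVr // mul1r.
Qed.

Section Linearization.
Variables (a b : nat) (N : 'M[R]_a) (N' : 'M[R]_b) (h : 'cV[R]_a -> 'cV[R]_b).
Hypothesis h_wd : forall X Y, in_image N (X - Y) -> cok_eq N' (h X) (h Y).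
Hypothesis h_add : forall X Y, cok_eq N' (h (X + Y)) (h X + h Y).
Variable k : nat.
Hypothesis N_pexp : forall X, in_image N (pexp k *: X).
Hypothesis N'_pexp : forall X, in_image N' (pexp k *: X).

Lemma cok_hom0 : cok_eq N' (h 0) 0.
Proof.
have := h_add 0 0; rewrite addr0 => /in_imageN; rewrite opprB.
by rewrite /cok_eq subr0 addrC addKr.
Qed.

Lemma cok_homN X : cok_eq N' (h (- X)) (- h X).
Proof.
have : cok_eq N' (h X + h (- X)) 0.
  by apply: cok_eq_trans cok_hom0; rewrite -(subrr X); apply/cok_eq_sym/h_add.
by rewrite /cok_eq subr0 opprK addrC.
Qed.

Lemma cok_homMn X n : cok_eq N' (h (X *+ n)) (h X *+ n).
Proof.
elim: n => [|n IH]; first by rewrite !mulr0n; apply: cok_hom0.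
by rewrite !mulrS; apply: cok_eq_trans (h_add _ _) _; apply: cok_eqD (cok_eq_refl _ _) IH.
Qed.

Lemma cok_homMz X z : cok_eq N' (h (X *~ z)) (h X *~ z).
Proof.
case: z => n; first exact: cok_homMn.
rewrite NegzE !mulrNz; apply: cok_eq_trans (cok_homN _) _.
exact/cok_eqN/cok_homMn.
Qed.

(* A scalar acts on both cokernels through its residue modulo [p ^ k]. *)
Lemma cok_homZ c X : cok_eq N' (h (c *: X)) (c *: h X).
Proof.
have [y ->] := padic_digits_approx p_prime c k.
set z := padic_digits c k; rewrite !scalerDl -!scalerA !scaler_int.
have : cok_eq N' (h (X *~ z + pexp k *: (y *: X))) (h (X *~ z)).
  by apply: h_wd; rewrite addrC addKr.
move/cok_eq_trans; apply; apply: cok_eq_trans (cok_homMz _ _) _.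
by rewrite /cok_eq opprD addrA subrr add0r; apply: in_imageN.
Qed.

Lemma cok_hom_sum (I : Type) (r : seq I) (F : I -> 'cV[R]_a) :
  cok_eq N' (h (\sum_(i <- r) F i)) (\sum_(i <- r) h (F i)).
Proof.
apply: (big_ind2 (fun u v => cok_eq N' (h u) v)); first exact: cok_hom0.
  by move=> x1 y1 x2 y2 e1 e2; apply: cok_eq_trans (h_add _ _) _; apply: cok_eqD.
by move=> i _; apply: cok_eq_refl.
Qed.

Definition cok_hom_mx : 'M[R]_(b, a) := \matrix_(i, j) h (delta_mx j 0) i 0.

Lemma cok_hom_mx_delta j : cok_hom_mx *m delta_mx j 0 = h (delta_mx j 0).
Proof. by rewrite -colE; apply/matrixP => i l; rewrite !mxE ord1. Qed.

Lemma cok_hom_mxP X : cok_eq N' (h X) (cok_hom_mx *m X).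
Proof.
have eX : X = \sum_(i < a) X i 0 *: delta_mx i 0.
  by rewrite {1}[X]matrix_sum_delta; apply: eq_bigr => i _; rewrite big_ord1.
rewrite eX mulmx_sumr; apply: cok_eq_trans (cok_hom_sum _ _) _.
by apply: cok_eq_sum => i; rewrite -scalemxAr cok_hom_mx_delta; apply: cok_homZ.
Qed.

End Linearization.

Lemma cok_isometric_lift a b (N : 'M[R]_a) (N' : 'M[R]_b) :
  \det N != 0 -> \det N' != 0 -> map_mx (@padic_red p) N' = 0 ->
  cok_isometric N N' ->
  exists G : 'M[R]_(b, a), row_free (map_mx (@padic_red p) G) /\
    forall i j, in_Zp (invmx (mxQp N) i j - ((mxQp G)^T *m invmx (mxQp N') *m mxQp G) i j).
Proof.
move=> dN dN' redN' [h [h_inj h_add h_surj h_pair]].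
have [k1 N_pexp] := in_image_pexp dN; have [k2 N'_pexp] := in_image_pexp dN'.
have h_wd X Y : in_image N (X - Y) -> cok_eq N' (h X) (h Y) by move/h_inj.
pose G := cok_hom_mx h.
have hG X : cok_eq N' (h X) (G *m X).
  apply: (cok_hom_mxP h_wd h_add (k := maxn k1 k2)) => Z.
    exact/N_pexp/leq_maxl.
  exact/N'_pexp/leq_maxr.
exists G; split.
  apply: row_free_surj => z; have [X hX] := h_surj (map_mx (@padic_lift p) z).
  have [w ew] := cok_eq_trans hX (hG X).
  exists (map_mx (@padic_red p) X).
  have := congr1 (map_mx (@padic_red p)) ew; rewrite !map_mxB !map_mxM redN' mul0mx.
  have -> : map_mx (@padic_red p) (map_mx (@padic_lift p) z) = z.
    by apply/matrixP => i j; rewrite !mxE padic_liftK.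
  by move/eqP; rewrite subr_eq0 => /eqP ->.
move=> i j; have := h_pair (delta_mx i 0) (delta_mx j 0).
rewrite /cok_pairing -!(cok_hom_mx_delta h) !mxQpM !mxQp_delta !delta_pairingE.
by rewrite trmx_mul !mulmxA => Hij; rewrite -[X in _ - X]delta_pairingE !mulmxA.
Qed.

End CokernelLinearization.

Lemma mxrank_congr (K : fieldType) n (V S : 'M[K]_n) :
  V \in unitmx -> \rank (V *m S *m V^T) = \rank S.
Proof.
move=> uV; rewrite mxrankMfree ?row_free_unit ?unitmx_tr //.
by rewrite -mxrank_tr trmx_mul mxrankMfree ?row_free_unit ?unitmx_tr // mxrank_tr.
Qed.

Lemma sym_congr_rank_block (K : fieldType) r m (S : 'M[K]_(r + m)) :
  S^T = S -> \rank S = r ->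
  exists V (Z : 'M[K]_r), [/\ V \in unitmx, Z \in unitmx & V *m S *m V^T = Z \oplus 0].
Proof.
move=> sS rS; pose V := invmx (col_ebase S).
have uV : V \in unitmx by rewrite unitmx_inv col_ebase_unit.
have VS : V *m S = pid_mx r *m row_ebase S.
  by rewrite -{1}(mulmx_ebase S) /V !mulmxA mulVmx ?col_ebase_unit // mul1mx rS.
have [Z VSV] : exists Z, V *m S *m V^T = Z \oplus 0.
  have : (V *m S *m V^T)^T = V *m S *m V^T by rewrite !trmx_mul trmxK sS mulmxA.
  rewrite VS -mulmxA pid_mx_block -[row_ebase S *m V^T]submxK mulmx_block.
  rewrite !mul0mx !mul1mx !addr0 tr_block_mx trmx0 => /eq_block_mx [_ ur0 _ _].
  by exists (ulsubmx (row_ebase S *m V^T)); rewrite -ur0.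
exists V, Z; split => //; rewrite -row_free_unit /row_free.
by rewrite -[X in _ == X]rS -(mxrank_congr S uV) VSV rank_diag_block_mx mxrank0 addn0.
Qed.

Lemma invmx_intertwine (K : comUnitRingType) n (A B S : 'M[K]_n) :
  A \in unitmx -> B \in unitmx -> A *m S = S *m B -> invmx A *m S = S *m invmx B.
Proof.
move=> uA uB AS.
by rewrite -[LHS](mulmxK uB) -(mulmxA (invmx A) S B) -AS mulKmx.
Qed.

Section InvNilSplitting.
Variable p : nat.
Hypothesis p_prime : prime p.
Local Notation R := (padic_int p).
Local Notation red := (@padic_red p).

Definition inv_nil_split n a m (M : 'M[R]_n) (A : 'M[R]_a) (N : 'M[R]_m) :=
  [/\ A^T = A, A \in unitmx, N^T = N, map_mx red N = 0 & mxcong M (A \oplus N)].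

Lemma inv_nil_split_rank n a m (M : 'M[R]_n) : (a + m)%N = n ->
  M^T = M -> \rank (map_mx red M) = a ->
  exists (A : 'M[R]_a) (N : 'M[R]_m), inv_nil_split M A N.
Proof.
move=> e; case: n / e in M * => sM rM.
have [|V [Z [uV uZ VMV]]] := sym_congr_rank_block _ rM; first by rewrite map_trmx sM.
pose U := map_mx (@padic_lift p) V.
have redU : map_mx red U = V by apply/matrixP => i j; rewrite !mxE padic_liftK.
have uU : U \in unitmx by rewrite (unitmx_red p_prime) redU.
have UM : mxcong M (U *m M *m U^T) by apply/congruent_mxcong; exists U.
have : (U *m M *m U^T)^T = U *m M *m U^T by rewrite !trmx_mul trmxK sM mulmxA.
have : map_mx red (U *m M *m U^T) = Z \oplus 0 by rewrite !map_mxM -map_trmx redU.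
move: UM; rewrite -[U *m M *m U^T]submxK.
set P := ulsubmx _; set B' := ursubmx _; set B := dlsubmx _; set Q := drsubmx _.
move=> UM; rewrite map_block_mx => /eq_block_mx [redP _ redB redQ].
rewrite tr_block_mx => /eq_block_mx [sP BB' _ sQ].
have uP : P \in unitmx by rewrite (unitmx_red p_prime) redP.
exists P, (Q - B *m invmx P *m B^T); split => //.
- by rewrite linearB /= !trmx_mul trmxK trmx_inv sP sQ mulmxA.
- by rewrite map_mxB !map_mxM redB redQ !mul0mx subr0.
by apply: (mxcong_trans UM); rewrite -BB'; apply: mxcong_schur_complement.
Qed.

Lemma inv_nil_split_exists n (M : 'M[R]_n) : M^T = M ->
  exists m, (m <= n)%N /\
    exists (A : 'M[R]_(n - m)) (N : 'M[R]_m), inv_nil_split M A N.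
Proof.
move=> sM; have rn := rank_leq_row (map_mx red M).
exists (n - \rank (map_mx red M))%N; split; first exact: leq_subr.
by apply: inv_nil_split_rank; rewrite ?subnK ?leq_subr ?subKn.
Qed.

Lemma inv_nil_split_det n a m (M : 'M[R]_n) (A : 'M[R]_a) (N : 'M[R]_m) :
  (a + m)%N = n -> inv_nil_split M A N -> \det M != 0 -> \det N != 0.
Proof.
move=> e [_ _ _ _ MAN] /(mxcong_det_neq0 e MAN).
by rewrite det_ublock mulf_eq0 negb_or => /andP [].
Qed.

End InvNilSplitting.

Section StabilizingMatrix.
Variables (K : comUnitRingType) (m : nat) (T : 'M[K]_m).

(* A unimodular matrix [R] with [Y *m invmx R *m Y^T = - T] for [Y = row_mx 1 1],
   whatever [T] is. *)
Definition stab_mx : 'M[K]_(m + m) := block_mx (T + 2%:M) 1%:M 1%:M 0.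

Lemma stab_mx_mulV : stab_mx *m block_mx 0 1%:M 1%:M (- T - 2%:M) = 1%:M.
Proof.
rewrite mulmx_block !mulmx0 !mul0mx !mulmx1 !mul1mx.
by rewrite !addr0 !add0r -opprD subrr -scalar_mx_block.
Qed.

Lemma stab_mx_unit : stab_mx \in unitmx.
Proof. by case: (mulmx1_unit stab_mx_mulV). Qed.

Lemma stab_mx_sym : T^T = T -> stab_mx^T = stab_mx.
Proof. by move=> sT; rewrite tr_block_mx trmx0 trmx1 linearD /= sT tr_scalar_mx. Qed.

Lemma stab_mx_schur :
  row_mx 1%:M 1%:M *m invmx stab_mx *m (row_mx 1%:M 1%:M)^T = - T.
Proof.
rewrite (mulmx1_invmx stab_mx_mulV) mul_row_block tr_row_mx trmx1 mul_row_col.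
by rewrite !mul1mx !mulmx1 add0r addrA addrC -[2%:M]/((1 + 1)%:M) raddfD subrK.
Qed.

End StabilizingMatrix.

Section Stabilization.
Variable p : nat.
Hypothesis p_prime : prime p.
Local Notation R := (padic_int p).
Local Notation red := (@padic_red p).

Lemma nil_inv_shift m (N N' S : 'M[R]_m) :
  N^T = N -> S^T = S -> map_mx red N = 0 -> \det N != 0 ->
  invmx (mxQp N) - invmx (mxQp N') = mxQp S ->
  exists2 T, T^T = T & N' = N + N *m T *m N.
Proof.
move=> sN sS redN dN eS.
have uNS : 1%:M - N *m S \in unitmx.
  by rewrite (unitmx_red p_prime) map_mxB map_mxM redN mul0mx subr0 map_mx1 unitmx1.
have uSN : 1%:M - S *m N \in unitmx.
  by rewrite (unitmx_red p_prime) map_mxB map_mxM redN mulmx0 subr0 map_mx1 unitmx1.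
pose T := S *m invmx (1%:M - N *m S).
have TNS : T *m (1%:M - N *m S) = S by rewrite mulmxKV.
exists T.
  rewrite /T trmx_mul trmx_inv linearB /= trmx1 trmx_mul sN sS.
  by apply: invmx_intertwine; rewrite // mulmxBl mulmxBr mul1mx mulmx1 mulmxA.
have tQ : mxQp T *m (1%:M - mxQp N *m mxQp S) = mxQp S.
  by rewrite -mxQp1 -mxQpM -mxQpB -mxQpM TNS.
have uN := unitmx_mxQp dN.
apply: mxQp_inj; rewrite -[mxQp N']invmxK; apply/mulmx1_invmx/mulmx1C.
have -> : invmx (mxQp N') = invmx (mxQp N) - mxQp S by rewrite -eS opprB addrC subrK.
rewrite mxQpD (mxQpM (N *m T) N) (mxQpM N T).
have -> : mxQp N + mxQp N *m mxQp T *m mxQp N = mxQp N *m (1%:M + mxQp T *m mxQp N).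
  by rewrite mulmxDr mulmx1 mulmxA.
rewrite -mulmxA mulmxDl mul1mx -mulmxA mulmxBr (mulmxV uN) tQ subrK.
exact: mulmxV.
Qed.

Lemma nil_stably_congruent m (N N' S : 'M[R]_m) :
  N^T = N -> S^T = S -> map_mx red N = 0 -> \det N != 0 ->
  invmx (mxQp N) - invmx (mxQp N') = mxQp S ->
  exists R1 R2 : 'M[R]_(m + m), [/\ R1^T = R1, R1 \in unitmx, R2^T = R2,
    R2 \in unitmx & mxcong (N \oplus R1) (N' \oplus R2)].
Proof.
move=> sN sS redN dN eS; have [T sT eN'] := nil_inv_shift sN sS redN dN eS.
pose Y : 'M[R]_(m, m + m) := row_mx 1%:M 1%:M.
exists (stab_mx T - Y^T *m N *m Y), (stab_mx T); split.
- by rewrite linearB /= stab_mx_sym // !trmx_mul trmxK sN mulmxA.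
- rewrite (unitmx_red p_prime) map_mxB !map_mxM redN mulmx0 mul0mx subr0.
  by rewrite -unitmx_red // stab_mx_unit.
- exact: stab_mx_sym.
- exact: stab_mx_unit.
have := mxcong_schur_swap Y sN (stab_mx_sym sT) (stab_mx_unit T).
by rewrite -(mulmxA N Y) -(mulmxA N (Y *m _)) stab_mx_schur mulmxN mulNmx opprK -eN'.
Qed.

End Stabilization.

Lemma trmx_invmxB (K : comUnitRingType) n (X Y : 'M[K]_n) : X^T = X -> Y^T = Y ->
  (invmx X - invmx Y)^T = invmx X - invmx Y.
Proof. by move=> sX sY; rewrite linearB /= !trmx_inv sX sY. Qed.

Section Equivalences.
Variable p : nat.
Hypothesis p_prime : prime p.
Local Notation R := (padic_int p).
Local Notation red := (@padic_red p).

Definition inv_nil_equivalent n1 n2 (M : 'M[R]_n1) (M' : 'M[R]_n2) :=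
  exists m : nat, (m <= minn n1 n2)%N /\
    exists (A : 'M[R]_(n1 - m)) (N : 'M[R]_m) (A' : 'M[R]_(n2 - m)) (N' : 'M[R]_m),
      [/\ symmx A /\ A \in unitmx,
          symmx N /\ in_pZp_mx N,
          symmx A' /\ A' \in unitmx /\ symmx N' /\ in_pZp_mx N',
          symmx (invmx (mxQp N) - invmx (mxQp N')) /\
            in_Zp_mx (invmx (mxQp N) - invmx (mxQp N')) &
          congruent_dim M (A \oplus N) /\ congruent_dim M' (A' \oplus N')].

Definition stably_congruent n1 n2 (M : 'M[R]_n1) (M' : 'M[R]_n2) :=
  exists n : nat, (maxn n1 n2 <= n)%N /\
    exists (C : 'M[R]_(n - n1)) (C' : 'M[R]_(n - n2)),
      [/\ symmx C, C \in unitmx, symmx C', C' \in unitmx &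
          congruent_dim (C \oplus M) (C' \oplus M')].

Lemma cok_isometric_inv_nil n a m (M : 'M[R]_n) (A : 'M[R]_a) (N : 'M[R]_m) :
  (a + m)%N = n -> inv_nil_split M A N -> \det M != 0 -> cok_isometric M N.
Proof.
move=> e MAN dM; have dN := inv_nil_split_det e MAN dM.
case: MAN => _ uA _ _ MAN.
exact: cok_isometric_trans (cok_isometric_mxcong dM MAN) (cok_isometric_drop uA dN).
Qed.

Lemma nil_cok_isometric_dim a b (N : 'M[R]_a) (N' : 'M[R]_b) :
  N^T = N -> \det N != 0 -> map_mx red N = 0 ->
  N'^T = N' -> \det N' != 0 -> map_mx red N' = 0 ->
  cok_isometric N N' -> a = b.
Proof.
have dim_le a' b' (X : 'M[R]_a') (X' : 'M[R]_b') : \det X != 0 -> \det X' != 0 ->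
    map_mx red X' = 0 -> cok_isometric X X' -> (b' <= a')%N.
  move=> dX dX' redX' /(cok_isometric_lift p_prime dX dX' redX') [G [/eqP Gfree _]].
  by rewrite -Gfree rank_leq_col.
move=> sN dN redN sN' dN' redN' iso; apply/eqP; rewrite eqn_leq.
rewrite (dim_le _ _ N N' dN dN' redN' iso).
by rewrite (dim_le _ _ N' N dN' dN redN (cok_isometric_sym sN' dN' iso)).
Qed.

Lemma nil_cok_isometric_congr m (N N' : 'M[R]_m) :
  N^T = N -> \det N != 0 -> N'^T = N' -> \det N' != 0 -> map_mx red N' = 0 ->
  cok_isometric N N' ->
  exists N'' : 'M[R]_m, [/\ N''^T = N'', map_mx red N'' = 0, mxcong N' N'',
    (invmx (mxQp N) - invmx (mxQp N''))^T = invmx (mxQp N) - invmx (mxQp N'') &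
    in_Zp_mx (invmx (mxQp N) - invmx (mxQp N''))].
Proof.
move=> sN dN sN' dN' redN' /(cok_isometric_lift p_prime dN dN' redN') [G [Gfree GN]].
have uG : G \in unitmx by rewrite (unitmx_red p_prime) -row_free_unit.
have GV : G *m invmx G = 1%:M by rewrite mulmxV.
have VG : invmx G *m G = 1%:M by rewrite mulVmx.
have GVQ : mxQp G *m mxQp (invmx G) = 1%:M by rewrite -mxQpM mulmxV ?mxQp1.
have VGQ : mxQp (invmx G) *m mxQp G = 1%:M by rewrite -mxQpM mulVmx ?mxQp1.
have [N'' defN''] : exists N'', N'' = invmx G *m N' *m (invmx G)^T by eexists.
have sN'' : N''^T = N'' by rewrite defN'' !trmx_mul trmxK sN' mulmxA.
have invN'' : invmx (mxQp N'') = (mxQp G)^T *m invmx (mxQp N') *m mxQp G.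
  by rewrite defN'' !mxQpM mxQp_tr (invmx_mxcong (unitmx_mxQp dN') VGQ GVQ).
exists N''; split => //.
- by rewrite defN'' !map_mxM redN' mulmx0 mul0mx.
- by rewrite defN''; exists (invmx G), G; rewrite mulVmx ?mulmxV.
- by apply: trmx_invmxB; rewrite -mxQp_tr ?sN ?sN''.
move=> i j; rewrite invN'' [X in in_Zp X]mxE [in X in in_Zp (_ + X)]mxE.
exact: GN.
Qed.

Lemma inv_nil_equivalent_of_cok_isometric n1 n2 (M : 'M[R]_n1) (M' : 'M[R]_n2) :
  symmx M -> symmx M' -> \det M != 0 -> \det M' != 0 ->
  cok_isometric M M' -> inv_nil_equivalent M M'.
Proof.
move=> sM sM' dM dM' iso.
have [m1 [le1 [A [N splitM]]]] := inv_nil_split_exists p_prime sM.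
have [m2 [le2 [A' [N' splitM']]]] := inv_nil_split_exists p_prime sM'.
have e1 : (n1 - m1 + m1)%N = n1 by rewrite subnK.
have e2 : (n2 - m2 + m2)%N = n2 by rewrite subnK.
have dN := inv_nil_split_det e1 splitM dM.
have dN' := inv_nil_split_det e2 splitM' dM'.
have isoN : cok_isometric N N'.
  have [_ _ sN _ _] := splitM.
  apply: cok_isometric_trans (cok_isometric_sym sN dN (cok_isometric_inv_nil e1 splitM dM)) _.
  exact: cok_isometric_trans iso (cok_isometric_inv_nil e2 splitM' dM').
have [[sA uA sN redN MAN] [sA' uA' sN' redN' MAN']] := (splitM, splitM').
have em := nil_cok_isometric_dim sN dN redN sN' dN' redN' isoN; subst m2.
have [N'' [sN'' redN'' N'N'' sD intD]] := nil_cok_isometric_congr sN dN sN' dN' redN' isoN.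
exists m1; split; first by rewrite leq_min le1 le2.
exists A, N, A', N''; split => //.
- by split => //; apply/(in_pZp_mxE p_prime).
- by do 3!split => //; apply/(in_pZp_mxE p_prime).
split; first exact: mxcong_congruent_dim e1 MAN.
apply: mxcong_congruent_dim e2 _.
exact: mxcong_trans MAN' (mxcong_dsum (mxcong_refl _) N'N'').
Qed.

Lemma stably_congruent_of_inv_nil_equivalent n1 n2 (M : 'M[R]_n1) (M' : 'M[R]_n2) :
  \det M != 0 -> inv_nil_equivalent M M' -> stably_congruent M M'.
Proof.
move=> dM [m [le_m [A [N [A' [N' [[sA uA] [sN pN] [sA' [uA' _]] [sD intD] [MAN M'AN']]]]]]]].
have e1 : (n1 - m + m)%N = n1 by move: le_m; rewrite leq_min => /andP [? _]; rewrite subnK.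
have redN : map_mx red N = 0 by apply/(in_pZp_mxE p_prime).
have dN : \det N != 0.
  by apply: (inv_nil_split_det (A := A) e1 _ dM); split => //; apply: congruent_dim_mxcong.
have [S eS] := in_Zp_mxP intD.
have sS : S^T = S by apply: mxQp_inj; rewrite mxQp_tr -eS.
have [R1 [R2 [sR1 uR1 sR2 uR2 NR]]] := nil_stably_congruent p_prime sN sS redN dN eS.
exists (n1 + n2 + m)%N; split; first by rewrite geq_max; apply/andP; split; lia.
have e : ((n2 - m) + (m + m))%N = (n1 + n2 + m - n1)%N by lia.
have e' : ((n1 - m) + (m + m))%N = (n1 + n2 + m - n2)%N by lia.
exists (castmx (e, e) (A' \oplus R1)), (castmx (e', e') (A \oplus R2)); split.
- exact/trmx_castmx_sym/trmx_dsum_sym.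
- by rewrite unitmx_castmx unitmx_dsum uA' uR1.
- exact/trmx_castmx_sym/trmx_dsum_sym.
- by rewrite unitmx_castmx unitmx_dsum uA uR2.
have ee : (n1 + n2 + m - n2 + n2)%N = (n1 + n2 + m - n1 + n1)%N by lia.
apply: (mxcong_congruent_dim ee).
have [MAN0 M'AN'0] := (congruent_dim_mxcong MAN, congruent_dim_mxcong M'AN').
apply: mxcong_trans (mxcong_dsum (mxcong_sym (mxcong_castmx _ _)) MAN0) _.
apply: mxcong_trans (mxcong_dsumC _ _) _.
apply: mxcong_trans (mxcong_dsumACA _ _ _ _) _.
apply: mxcong_trans (mxcong_dsum (mxcong_refl _) (mxcong_trans NR (mxcong_dsumC _ _))) _.
apply: mxcong_trans (mxcong_dsumACA _ _ _ _) _.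
exact: mxcong_dsum (mxcong_castmx _ _) (mxcong_sym M'AN'0).
Qed.

Lemma cok_isometric_of_stably_congruent n1 n2 (M : 'M[R]_n1) (M' : 'M[R]_n2) :
  symmx M -> \det M != 0 -> \det M' != 0 ->
  stably_congruent M M' -> cok_isometric M M'.
Proof.
move=> sM dM dM' [n [_ [C [C' [_ uC _ uC' CM]]]]].
have dCM : \det (C \oplus M) != 0 by rewrite det_ublock mulf_neq0 // unitmx_det_neq0.
apply: cok_isometric_trans (cok_isometric_sym sM dM (cok_isometric_drop uC dM)) _.
apply: cok_isometric_trans (cok_isometric_mxcong dCM (congruent_dim_mxcong CM)) _.
exact: cok_isometric_drop uC' dM'.
Qed.

End Equivalences.

Unset Implicit Arguments. Set Strict Implicit.

Theorem mainTheorem4 (p : nat) (pp : prime p) (n1 n2 : nat)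
  (hn1 : (0 < n1)%N) (hn2 : (0 < n2)%N)
  (M : 'M[padic_int p]_n1) (M' : 'M[padic_int p]_n2)
  (sM : symmx M) (sM' : symmx M') (dM : \det M != 0) (dM' : \det M' != 0) :
  [<->
   (* (i) *)
   cok_isometric M M';
   (* (ii) *)
   exists m : nat, (m <= minn n1 n2)%N /\
     exists (A : 'M[padic_int p]_(n1 - m)) (N : 'M[padic_int p]_m)
            (A' : 'M[padic_int p]_(n2 - m)) (N' : 'M[padic_int p]_m),
       [/\ symmx A /\ A \in unitmx,
           symmx N /\ in_pZp_mx N,
           symmx A' /\ A' \in unitmx /\ symmx N' /\ in_pZp_mx N',
           symmx (invmx (mxQp N) - invmx (mxQp N')) /\
             in_Zp_mx (invmx (mxQp N) - invmx (mxQp N')) &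
           congruent_dim M (block_mx A 0 0 N) /\
           congruent_dim M' (block_mx A' 0 0 N')];
   (* (iii) *)
   exists n : nat, (maxn n1 n2 <= n)%N /\
     exists (C : 'M[padic_int p]_(n - n1)) (C' : 'M[padic_int p]_(n - n2)),
       [/\ symmx C, C \in unitmx, symmx C', C' \in unitmx &
           congruent_dim (block_mx C 0 0 M) (block_mx C' 0 0 M')]].
Proof.
tfae.
- exact (inv_nil_equivalent_of_cok_isometric pp sM sM' dM dM').
- exact (stably_congruent_of_inv_nil_equivalent pp dM).
- exact (cok_isometric_of_stably_congruent sM dM dM').
Qed.
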